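(* Let a domain $v$ be a triple $(\mu^{(v)}, f^{(v)}, g^{(v)})$ with $\mu^{(v)}$ a distribution on inputs $\bm{x}\in\mathbb{R}^d$, $f^{(v)}:\mathbb{R}^d\to\mathbb{R}^{d'}$ ($d'\le d$) a representation function and $g^{(v)}:\mathbb{R}^{d'}\to\mathcal{Y}$ a stochastic labeling function; write $h^{(v)}=g^{(v)}\circ f^{(v)}$. Let $u$ be the unseen domain and $s$ a seen domain. For a hypothesis $h=g\circ f$ with $f:\mathbb{R}^d\to\mathbb{R}^{d'}$, $g:\mathbb{R}^{d'}\to\mathcal{Y}$, define the risk $R^{(v)}(h):=\mathbb{E}_{\bm{x}\sim\mu^{(v)}}[\ell(h(\bm{x}),h^{(v)}(\bm{x}))]$. Assume (i) the loss $\ell(\cdot,\cdot)$ is non-negative, symmetric, bounded by a finite positive number $L$, and satisfies the triangle inequality; and (ii) the representation function $f$ is invertible when restricted to the (intrinsically low-dimensional) data manifold, i.e. on the support of the input distributions. Then for any such hypothesis $h=g\circ f$, \[ R^{(u)}(h)\le R^{(s)}(h)+L\,\|f_{\#}\mu^{(u)}-f_{\#}\mu^{(s)}\|_1+\sigma^{(u,s)}, \] where $f_{\#}\mu^{(v)}$ is the pushforward of $\mu^{(v)}$ under $f$ (the distribution of $f(\bm{x})$ with $\bm{x}\sim\mu^{(v)}$), $\|f_{\#}\mu^{(u)}-f_{\#}\mu^{(s)}\|_1=\int|f_{\#}\mu^{(u)}-f_{\#}\mu^{(s)}|\,d\bm{x}$ is the $L^1$ distance between the pushforwards, and \[ \sigma^{(u,s)}:=\min\Big\{\mathbb{E}_{\bm{x}\sim\mu^{(u)}}[\ell(h^{(u)}(\bm{x}),h^{(s)}(\bm{x}))],\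 \mathbb{E}_{\bm{x}\sim\mu^{(s)}}[\ell(h^{(u)}(\bm{x}),h^{(s)}(\bm{x}))]\Big\}. \]
   Context: Domain generalization setting with one unseen domain $u$ and seen domains. $\sigma^{(u,s)}$ does not depend on the learned hypothesis $h$. The invertibility of $f$ is used to rewrite expectations over $\bm{x}$ as expectations over $\bm{z}=f(\bm{x})$ via $\bm{x}=f^{-1}(\bm{z})$. *)

From HB Require Import structures.
From mathcomp Require Import all_boot all_order all_algebra.
From mathcomp Require Import all_classical all_reals all_analysis.
Set Implicit Arguments. Unset Strict Implicit. Unset Printing Implicit Defensive.
Import Order.TTheory GRing.Theory Num.Theory.
Local Open Scope classical_set_scope.
Local Open Scope ring_scope.
Local Open Scope ereal_scope.

Definition risk d (X : measurableType d) (R : realType) dY (Y : measurableType dY)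
  (mu : {measure set X -> \bar R}) (ell : Y -> Y -> R) (h hv : X -> Y) : \bar R :=
  \int[mu]_x (ell (h x) (hv x))%:E.

Definition l1_dist d (Z : measurableType d) (R : realType)
  (lam : {measure set Z -> \bar R}) (p q : Z -> R) : \bar R :=
  \int[lam]_z (`| p z - q z |)%:E.

Definition sigma_us d (X : measurableType d) (R : realType) dY (Y : measurableType dY)
  (mu_u mu_s : {measure set X -> \bar R}) (ell : Y -> Y -> R) (h_u h_s : X -> Y) : \bar R :=
  mine (risk mu_u ell h_u h_s) (risk mu_s ell h_u h_s).

(* Because f is injective on a set M carrying both input distributions, an
   integrand ell (g (f x)) (k x) equals ell (g z) (k (finv z)) at z = f x
   almost surely, so each risk of g \o f is an integral against the density
   of the pushforward of the input distribution by f.  As 0 <= ell <= L,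
   trading the density p_u for p_s costs at most L * |p_u - p_s|_1.  The
   triangle inequality for ell then splits the unseen risk in two ways:
   through h_s under mu_u and then shifting, or shifting first and then
   through h_s under mu_s; the better of the two gives the minimum sigma. *)

From HB Require Import structures.
From mathcomp Require Import all_boot all_order all_algebra.
From mathcomp Require Import all_classical all_reals all_analysis.
From mathcomp Require Import measurable_realfun lra.
Set Implicit Arguments. Unset Strict Implicit. Unset Printing Implicit Defensive.
Import Order.TTheory GRing.Theory Num.Theory.
Local Open Scope classical_set_scope.
Local Open Scope ring_scope.
Import HBNNSimple.

Section density.
Context d (T : measurableType d) (R : realType).
Local Open Scope ereal_scope.
Variables (nu lam : {measure set T -> \bar R}) (p : T -> R).
Hypotheses (mp : measurable_fun setT p) (p_ge0 : forall x, (0 <= p x)%R).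
Hypothesis nu_density :
  forall A, measurable A -> nu A = \int[lam]_(x in A) (p x)%:E.

Lemma integral_density_nnsfun (h : {nnsfun T >-> R}) :
  \int[nu]_x (h x)%:E = \int[lam]_x (h x * p x)%:E.
Proof.
have mhy y : measurable_fun [set: T] (fun x => y * \1_(h @^-1` [set y]) x)%R.
  by apply: measurable_funM => //; exact/measurable_indicP.
under eq_integral do rewrite fimfunE -fsumEFin//.
under [RHS]eq_integral do rewrite fimfunE mulr_fsuml -fsumEFin//.
rewrite !ge0_integral_fsum//.
- apply: eq_fsbigr => y; rewrite inE => -[x _ <-].
  rewrite integralZl_indic_nnsfun// integral_indic// setIT nu_density//.
  rewrite -ge0_integralZl_EFin//; last 2 first.
  + by move=> z _; rewrite lee_fin.
  + exact/measurable_funTS/measurable_EFinP.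
  rewrite integral_mkcond; apply: eq_integral => z _.
  by rewrite patchE indicE; case: (z \in _); rewrite ?mulr1 ?mulr0 ?mul0r.
- by move=> y; apply/measurable_EFinP; exact: measurable_funM.
- move=> y z _; rewrite lee_fin -mulrA.
  have [y0|y0] := leP 0%R y; first by rewrite mulr_ge0// mulr_ge0.
  by rewrite preimage_nnfun0// indic0 mul0r mulr0.
- by move=> y; exact/measurable_EFinP.
- by move=> y z _; rewrite nnfun_muleindic_ge0.
Qed.

Lemma integral_density (phi : T -> R) :
  measurable_fun setT phi -> (forall x, (0 <= phi x)%R) ->
  \int[nu]_x (phi x)%:E = \int[lam]_x (phi x * p x)%:E.
Proof.
move=> mphi phi_ge0.
have mphiE : measurable_fun [set: T] (EFin \o phi) by exact/measurable_EFinP.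
pose h := nnsfun_approx measurableT mphiE.
have h_cvg x : (EFin \o h^~ x) @ \oo --> (phi x)%:E.
  by apply: cvg_nnsfun_approx => // z _; rewrite lee_fin.
have h_nd x : {homo h^~ x : m n / (m <= n)%N >-> (m <= n)%R}.
  by move=> m n mn; exact/lefP/nd_nnsfun_approx.
have mhE k : measurable_fun [set: T] (EFin \o h k).
  exact/measurable_EFinP/measurable_funP.
have mhpE k : measurable_fun [set: T] (fun x => (h k x * p x)%:E).
  by apply/measurable_EFinP; apply: measurable_funM => //; exact: measurable_funP.
transitivity (limn (fun k => \int[nu]_x (h k x)%:E)).
  rewrite -monotone_convergence//.
  - by apply: eq_integral => x _; apply/esym/cvg_lim => //; exact: h_cvg.
  - by move=> k x _; rewrite lee_fin.
  - by move=> x _ m n mn; rewrite lee_fin h_nd.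
under eq_fun do rewrite integral_density_nnsfun.
rewrite -monotone_convergence//.
- apply: eq_integral => x _; apply/cvg_lim => //.
  rewrite EFinM; under eq_fun do rewrite EFinM.
  exact: cvgeZr (h_cvg x).
- by move=> k x _; rewrite lee_fin mulr_ge0.
- by move=> x _ m n mn; rewrite lee_fin ler_wpM2r// h_nd.
Qed.

End density.

Section ae_eq_pushforward.
Context d1 d2 (X : measurableType d1) (Z : measurableType d2) (R : realType).
Local Open Scope ereal_scope.

Lemma ae_eq_integral_pushforward (mu : {measure set X -> \bar R})
    (f : X -> Z) (M : set X) (phi : X -> R) (psi : Z -> R) :
  measurable_fun setT f -> measurable M -> mu (~` M) = 0 ->
  measurable_fun setT phi -> measurable_fun setT psi ->
  (forall z, (0 <= psi z)%R) -> (forall x, M x -> phi x = psi (f x)) ->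
  \int[mu]_x (phi x)%:E = \int[pushforward mu f]_z (psi z)%:E.
Proof.
move=> mf mM M_null mphi mpsi psi_ge0 phi_psi.
have mpsiE : measurable_fun [set: Z] (EFin \o psi) by exact/measurable_EFinP.
rewrite ge0_integral_pushforward//; last by move=> z _; rewrite lee_fin.
rewrite preimage_setT; apply: ae_eq_integral => //.
- exact/measurable_EFinP.
- exact: measurableT_comp mpsiE mf.
- exists (~` M); split => //; first exact: measurableC.
  by move=> x /= neq Mx; apply: neq => _; rewrite phi_psi.
Qed.

End ae_eq_pushforward.

Section density_shift.
Context d (Z : measurableType d) (R : realType).
Local Open Scope ereal_scope.

Lemma integral_density_shift (lam : {measure set Z -> \bar R})
    (p q phi : Z -> R) (L : R) :
  measurable_fun setT p -> measurable_fun setT q -> measurable_fun setT phi ->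
  (forall z, 0 <= p z)%R -> (forall z, 0 <= q z)%R ->
  (forall z, 0 <= phi z <= L)%R -> (0 <= L)%R ->
  \int[lam]_z (phi z * p z)%:E <=
  \int[lam]_z (phi z * q z)%:E + L%:E * l1_dist lam p q.
Proof.
move=> mp mq mphi p_ge0 q_ge0 phi_bnd L_ge0.
have phi_ge0 z : (0 <= phi z)%R by have /andP[] := phi_bnd z.
have mphi_p : measurable_fun [set: Z] (fun z => (phi z * p z)%:E).
  by apply/measurable_EFinP; exact: measurable_funM.
have mphi_q : measurable_fun [set: Z] (fun z => (phi z * q z)%:E).
  by apply/measurable_EFinP; exact: measurable_funM.
have mdist : measurable_fun [set: Z] (fun z => (`|p z - q z|)%:E).
  apply/measurable_EFinP; apply: measurableT_comp => //.
  exact: measurable_funB.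
rewrite /l1_dist -ge0_integralZl_EFin// -ge0_integralD//; last 3 first.
- by move=> z _; rewrite lee_fin mulr_ge0.
- by move=> z _; rewrite mule_ge0.
- exact: measurable_funeM.
apply: ge0_le_integral => //.
- by move=> z _; rewrite lee_fin mulr_ge0.
- exact: emeasurable_funD (measurable_funeM _ _).
(* phi p = phi q + phi (p - q) and phi (p - q) <= L |p - q| *)
move=> z _; rewrite -EFinM -EFinD lee_fin.
have := phi_bnd z; have := ler_norm (p z - q z)%R.
have := normr_ge0 (p z - q z)%R; nra.
Qed.

End density_shift.

Section loss.
Context dY (Y : measurableType dY) (R : realType) (ell : Y -> Y -> R).
Local Open Scope ereal_scope.
Hypothesis ell_meas : measurable_fun [set: Y * Y] (fun y => ell y.1 y.2).
Hypothesis ell_ge0 : forall a b, (0 <= ell a b)%R.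

Lemma measurable_loss d (T : measurableType d) (a b : T -> Y) :
  measurable_fun setT a -> measurable_fun setT b ->
  measurable_fun setT (fun x => ell (a x) (b x)).
Proof.
by move=> ma mb; exact: measurableT_comp ell_meas (measurable_fun_pair ma mb).
Qed.

Lemma risk_triangle d (X : measurableType d) (mu : {measure set X -> \bar R})
    (h h1 h2 : X -> Y) :
  (forall a b, ell a b = ell b a) ->
  (forall a b c, (ell a c <= ell a b + ell b c)%R) ->
  measurable_fun setT h -> measurable_fun setT h1 -> measurable_fun setT h2 ->
  risk mu ell h h1 <= risk mu ell h h2 + risk mu ell h1 h2.
Proof.
move=> ell_sym ell_tri mh mh1 mh2.
have mloss (a b : X -> Y) : measurable_fun setT a -> measurable_fun setT b ->
    measurable_fun setT (fun x => (ell (a x) (b x))%:E).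
  by move=> ma mb; apply/measurable_EFinP; exact: measurable_loss.
have m_hh1 := mloss _ _ mh mh1; have m_hh2 := mloss _ _ mh mh2.
have m_h1h2 := mloss _ _ mh1 mh2.
rewrite /risk -ge0_integralD//; last 2 first.
- by move=> x _; rewrite lee_fin.
- by move=> x _; rewrite lee_fin.
apply: ge0_le_integral => //.
- by move=> x _; rewrite lee_fin.
- exact: emeasurable_funD.
by move=> x _; rewrite lee_fin (ell_sym (h1 x)).
Qed.

Section invertible_representation.
Context dX dZ (X : measurableType dX) (Z : measurableType dZ).
Variables (f : X -> Z) (g : Z -> Y) (finv : Z -> X) (M : set X).
Variable lam : {measure set Z -> \bar R}.
Hypotheses (mf : measurable_fun setT f) (mg : measurable_fun setT g).
Hypotheses (mfinv : measurable_fun setT finv) (mM : measurable M).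
Hypothesis finvK : forall x, M x -> finv (f x) = x.

Lemma risk_density (mu : {measure set X -> \bar R}) (p : Z -> R) (k : X -> Y) :
  measurable_fun setT p -> (forall z, (0 <= p z)%R) ->
  (forall A, measurable A ->
     pushforward mu f A = \int[lam]_(z in A) (p z)%:E) ->
  mu (~` M) = 0 -> measurable_fun setT k ->
  risk mu ell (g \o f) k = \int[lam]_z (ell (g z) (k (finv z)) * p z)%:E.
Proof.
move=> mp p_ge0 p_density M_null mk.
have mloss_inv : measurable_fun setT (fun z => ell (g z) (k (finv z))).
  by apply: measurable_loss => //; exact: measurableT_comp.
rewrite /risk (ae_eq_integral_pushforward mf mM M_null _ mloss_inv)//.
- exact: integral_density.
- by apply: measurable_loss => //; exact: measurableT_comp.
- by move=> x Mx /=; rewrite finvK.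
Qed.

Lemma risk_le_shift (L : R) (mu_u mu_s : {measure set X -> \bar R})
    (p_u p_s : Z -> R) (k : X -> Y) :
  (forall a b, (ell a b <= L)%R) -> (0 <= L)%R ->
  measurable_fun setT p_u -> measurable_fun setT p_s ->
  (forall z, (0 <= p_u z)%R) -> (forall z, (0 <= p_s z)%R) ->
  (forall A, measurable A ->
     pushforward mu_u f A = \int[lam]_(z in A) (p_u z)%:E) ->
  (forall A, measurable A ->
     pushforward mu_s f A = \int[lam]_(z in A) (p_s z)%:E) ->
  mu_u (~` M) = 0 -> mu_s (~` M) = 0 -> measurable_fun setT k ->
  risk mu_u ell (g \o f) k <=
  risk mu_s ell (g \o f) k + L%:E * l1_dist lam p_u p_s.
Proof.
move=> ell_le L_ge0 mp_u mp_s p_u_ge0 p_s_ge0 p_u_density p_s_density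
  M_u M_s mk.
rewrite (risk_density mp_u) // (risk_density mp_s) //.
apply: integral_density_shift => // [|z].
- by apply: measurable_loss => //; exact: measurableT_comp.
- by rewrite ell_ge0 ell_le.
Qed.

End invertible_representation.
End loss.

Theorem lemma1 (R : realType) (n n' : nat) (hn : (n' <= n)%N)
  (dY : measure_display) (Y : measurableType dY)
  (ell : Y -> Y -> R) (L : R)
  (ell_meas : measurable_fun [set: Y * Y] (fun p => ell p.1 p.2))
  (ell_ge0 : forall a b, 0 <= ell a b)
  (ell_sym : forall a b, ell a b = ell b a)
  (L_gt0 : 0 < L)
  (ell_le : forall a b, ell a b <= L)
  (ell_tri : forall a b c, ell a c <= ell a b + ell b c)
  (mu_u mu_s : probability (n.-tuple R) R)
  (f_u f_s : n.-tuple R -> n'.-tuple R) (g_u g_s : n'.-tuple R -> Y)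
  (mf_u : measurable_fun [set: n.-tuple R] f_u)
  (mf_s : measurable_fun [set: n.-tuple R] f_s)
  (mg_u : measurable_fun [set: n'.-tuple R] g_u)
  (mg_s : measurable_fun [set: n'.-tuple R] g_s)
  (f : n.-tuple R -> n'.-tuple R) (g : n'.-tuple R -> Y)
  (mf : measurable_fun [set: n.-tuple R] f)
  (mg : measurable_fun [set: n'.-tuple R] g)
  (M : set (n.-tuple R)) (mM : measurable M)
  (M_u : mu_u (~` M) = 0%E) (M_s : mu_s (~` M) = 0%E)
  (finv : n'.-tuple R -> n.-tuple R)
  (mfinv : measurable_fun [set: n'.-tuple R] finv)
  (finvK : forall x, M x -> finv (f x) = x)
  (lam : {measure set (n'.-tuple R) -> \bar R})
  (p_u p_s : n'.-tuple R -> R)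
  (mp_u : measurable_fun [set: n'.-tuple R] p_u)
  (mp_s : measurable_fun [set: n'.-tuple R] p_s)
  (p_u_ge0 : forall z, 0 <= p_u z) (p_s_ge0 : forall z, 0 <= p_s z)
  (p_u_dens : forall A, measurable A ->
     pushforward mu_u f A = (\int[lam]_(z in A) (p_u z)%:E)%E)
  (p_s_dens : forall A, measurable A ->
     pushforward mu_s f A = (\int[lam]_(z in A) (p_s z)%:E)%E) :
  (risk mu_u ell (g \o f) (g_u \o f_u)
   <= risk mu_s ell (g \o f) (g_s \o f_s)
      + L%:E * l1_dist lam p_u p_s
      + sigma_us mu_u mu_s ell (g_u \o f_u) (g_s \o f_s))%E.
Proof.
have mh_u : measurable_fun setT (g_u \o f_u) by exact: measurableT_comp.
have mh_s : measurable_fun setT (g_s \o f_s) by exact: measurableT_comp.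
have shift k : measurable_fun setT k ->
    (risk mu_u ell (g \o f) k <=
     risk mu_s ell (g \o f) k + L%:E * l1_dist lam p_u p_s)%E.
  move=> mk; apply: (risk_le_shift ell_meas ell_ge0 mf mg mfinv mM finvK) => //.
  exact: ltW.
have triangle (mu : probability (n.-tuple R) R) :
    (risk mu ell (g \o f) (g_u \o f_u) <=
     risk mu ell (g \o f) (g_s \o f_s) + risk mu ell (g_u \o f_u) (g_s \o f_s))%E.
  by apply: risk_triangle => //; exact: measurableT_comp.
rewrite /sigma_us.
have [_|_] := leP (risk mu_u ell (g_u \o f_u) (g_s \o f_s))
                  (risk mu_s ell (g_u \o f_u) (g_s \o f_s)).
- exact: le_trans (triangle mu_u) (leeD2r _ (shift _ mh_s)).
- apply: le_trans (le_trans (shift _ mh_u) (leeD2r _ (triangle mu_s))) _.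
  by rewrite (addeAC (risk mu_s ell (g \o f) (g_s \o f_s))).
Qed.
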